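(* Let $(y_i,x_i)$, $i=1,\dots,n$, $y_i\in\mathbb{R}^q$, $x_i\in\mathbb{R}^p$, be data, let $\rho_1$ be a differentiable $\rho$-function with $\psi_1=\rho_1'$ and $W(u)=\psi_1(u)/u$, and let $\hat\sigma_n>0$ be a fixed scale. Consider the iteration: start with $B^{(0)}\in\mathbb{R}^{p\times q}$ and $\Sigma^{(0)}=\hat\sigma_n^2\Gamma^{(0)}$ with $\Gamma^{(0)}\in\mathcal{S}_q$, $|\Gamma^{(0)}|=1$; given $(B^{(k)},\Sigma^{(k)})$, set $\omega_{ik}=W(d_i(B^{(k)},\Sigma^{(k)}))$, let $B^{(k+1)}$ be the weighted least squares fit obtained by computing each column of $B$ separately by weighted least squares with weights $\omega_{ik}$ (i.e. $B^{(k+1)}$ minimizes $\sum_i\omega_{ik}\|y_i-B'x_i\|^2$), let $C^{(k+1)}=\sum_{i=1}^n\omega_{ik}(y_i-B^{(k+1)\prime}x_i)(y_i-B^{(k+1)\prime}x_i)'$ and $\Sigma^{(k+1)}=\hat\sigma_n^2C^{(k+1)}/|C^{(k+1)}|^{1/q}$. If $W(u)$ is nonincreasing in $|u|$, then at each iteration the function $\sum_{i=1}^n\rho_1(d_i(B^{(k)},\Sigma^{(k)}))$ is nonincreasing in $k$.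
   Context: $\mathcal{S}_q$ is the set of positive definite symmetric $q\times q$ matrices, $|\cdot|$ the determinant. A $\rho$-function is a continuous nondecreasing function of $|u|$ with $\rho(0)=0$, $\sup\rho=1$, strictly increasing on nonnegative $u$ with $\rho(u)<1$. $d_i(B,\Sigma)=((y_i-B'x_i)'\Sigma^{-1}(y_i-B'x_i))^{1/2}$. In the paper $B^{(0)},\Gamma^{(0)}$ are initial estimates $\tilde B_n,\tilde\Sigma_n$ (with $|\tilde\Sigma_n|=1$) and $\hat\sigma_n$ is the M-scale of the Mahalanobis norms $d_i(\tilde B_n,\tilde\Sigma_n)$. *)

From HB Require Import structures.
From mathcomp Require Import all_boot all_order all_algebra.
From mathcomp Require Import all_classical all_reals all_analysis.
Set Implicit Arguments. Unset Strict Implicit. Unset Printing Implicit Defensive.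
Import Order.TTheory GRing.Theory Num.Theory.
Import numFieldNormedType.Exports.
Local Open Scope ring_scope.

Section Defs.
Variable R : realType.

Definition rho_function (rho : R -> R) : Prop :=
  continuous rho /\
  (forall u, rho u = rho `|u|) /\
  (forall a b, 0 <= a -> a <= b -> rho a <= rho b) /\
  rho 0 = 0 /\
  ((forall u, rho u <= 1) /\ (forall e, 0 < e -> exists u, 1 - e < rho u)) /\
  (forall a b, 0 <= a -> a < b -> rho a < 1 -> rho a < rho b).

Definition posdef (q : nat) (S : 'M[R]_q) : Prop :=
  S^T = S /\ (forall v : 'cV[R]_q, v != 0 -> 0 < (v^T *m S *m v) 0 0).

Definition resid (p q : nat) (B : 'M[R]_(p, q)) (y : 'cV[R]_q) (x : 'cV[R]_p)
  : 'cV[R]_q := y - B^T *m x.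

Definition mahal (p q : nat) (B : 'M[R]_(p, q)) (S : 'M[R]_q)
  (y : 'cV[R]_q) (x : 'cV[R]_p) : R :=
  Num.sqrt (((resid B y x)^T *m invmx S *m resid B y x) 0 0).

Definition sqnorm (q : nat) (v : 'cV[R]_q) : R := (v^T *m v) 0 0.

Definition wls_obj (n p q : nat) (w : 'I_n -> R) (y : 'I_n -> 'cV[R]_q)
  (x : 'I_n -> 'cV[R]_p) (B : 'M[R]_(p, q)) : R :=
  \sum_(i < n) w i * sqnorm (resid B (y i) (x i)).

Definition wcov (n p q : nat) (w : 'I_n -> R) (y : 'I_n -> 'cV[R]_q)
  (x : 'I_n -> 'cV[R]_p) (B : 'M[R]_(p, q)) : 'M[R]_q :=
  \sum_(i < n) w i *: (resid B (y i) (x i) *m (resid B (y i) (x i))^T).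

End Defs.

From HB Require Import structures.
From mathcomp Require Import all_boot all_order all_algebra.
From mathcomp Require Import all_classical all_reals all_analysis.
From mathcomp Require Import ring lra.
Set Implicit Arguments. Unset Strict Implicit. Unset Printing Implicit Defensive.
Import Order.TTheory GRing.Theory Num.Theory.
Import numFieldNormedType.Exports.
Local Open Scope ring_scope.

(* The iteration is a majorize-minimize scheme.  Since W is nonincreasing,
   rho b <= rho a + W a / 2 * (b^2 - a^2) for a, b >= 0, so with the current
   weights w_i the change of sum_i rho(d_i) is at most half the change of
   sum_i w_i d_i^2.  That weighted sum does not increase: the weighted least
   squares fit minimizes sum_i w_i r_i' T r_i for every positive definite T, in
   particular for T = Sigma^(k)^-1; and among matrices of the fixed determinant
   sigma^(2q), the one proportional to the scatter C minimizes tr (Sigma^-1 C),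
   by AM-GM on the diagonal of a Cholesky-transformed C (Hadamard's
   inequality). *)

Section QuadraticForms.
Variable R : realType.

Definition bilform n (A : 'M[R]_n) (u v : 'cV[R]_n) : R := (u^T *m A *m v) 0 0.
Definition qform n (A : 'M[R]_n) (v : 'cV[R]_n) : R := bilform A v v.

Lemma trmx11E (X : 'M[R]_1) : X^T 0 0 = X 0 0.
Proof. by rewrite mxE. Qed.

Lemma bilformC n (A : 'M[R]_n) u v : A^T = A -> bilform A u v = bilform A v u.
Proof.
by move=> A_sym; rewrite /bilform -trmx11E !trmx_mul trmxK A_sym mulmxA.
Qed.

Lemma bilformZl n (A : 'M[R]_n) t u v : bilform A (t *: u) v = t * bilform A u v.
Proof. by rewrite /bilform linearZ /= -!scalemxAl mxE. Qed.

Lemma qformZ n (A : 'M[R]_n) t u : qform A (t *: u) = t ^+ 2 * qform A u.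
Proof.
by rewrite /qform /bilform linearZ /= linearZ /= -!scalemxAl !mxE mulrA expr2.
Qed.

Lemma qformB n (A : 'M[R]_n) u v : A^T = A ->
  qform A (u - v) = qform A u - 2 * bilform A v u + qform A v.
Proof.
move=> A_sym; have := bilformC u v A_sym; rewrite /qform /bilform => uv.
have -> : (u - v)^T = u^T - v^T by rewrite linearB.
have mxB (X Y : 'M[R]_1) : (X - Y) 0 0 = X 0 0 - Y 0 0 by rewrite !mxE.
rewrite !mulmxBr !mulmxBl !mxB uv; ring.
Qed.

Lemma qform_trace n (A : 'M[R]_n) v : qform A v = \tr (A *m (v *m v^T)).
Proof. by rewrite /qform /bilform mulmxA mxtrace_mulC mulmxA /mxtrace big_ord1. Qed.

Lemma sum_qform_trace n m (A : 'M[R]_n) (w : 'I_m -> R) (r : 'I_m -> 'cV[R]_n) :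
  \sum_i w i * qform A (r i) = \tr (A *m \sum_i w i *: (r i *m (r i)^T)).
Proof.
rewrite mulmx_sumr raddf_sum; apply: eq_bigr => i _.
by rewrite /= -scalemxAr mxtraceZ qform_trace.
Qed.

Lemma qform_block n (a : 'M[R]_1) (b : 'M[R]_(1, n)) (D : 'M[R]_n) s v :
  qform (block_mx a b b^T D) (col_mx s v) =
  (s^T *m a *m s) 0 0 + 2 * (s^T *m b *m v) 0 0 + qform D v.
Proof.
have mxD (X Y : 'M[R]_1) : (X + Y) 0 0 = X 0 0 + Y 0 0 by rewrite !mxE.
rewrite /qform /bilform tr_col_mx mul_row_block mul_row_col !mulmxDl !mxD.
have -> : v^T *m b^T *m s = (s^T *m b *m v)^T by rewrite !trmx_mul !trmxK mulmxA.
rewrite trmx11E; ring.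
Qed.

Lemma posdef_qform_ge0 n (S : 'M[R]_n) v : posdef S -> 0 <= qform S v.
Proof.
move=> S_pd; have [->|v_neq0] := eqVneq v 0; last exact: ltW (S_pd.2 v v_neq0).
by rewrite /qform /bilform trmx0 !mul0mx mxE.
Qed.

Lemma posdef_schur n (a : 'M[R]_1) (b : 'M[R]_(1, n)) (D : 'M[R]_n) :
  posdef (block_mx a b b^T D) -> 0 < a 0 0 /\ posdef (D - (a 0 0)^-1 *: (b^T *m b)).
Proof.
move=> [M_sym M_pd]; set al := a 0 0.
have pos v : v != 0 -> 0 < qform (block_mx a b b^T D) v := M_pd v.
have D_sym : D^T = D by have := congr1 drsubmx M_sym; rewrite tr_block_mx !block_mxKdr.
have al_gt0 : 0 < al.
  have := pos (col_mx (1%:M : 'cV[R]_1) (0 : 'cV[R]_n)).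
  rewrite col_mx_eq0 (negbTE (matrix_nonzero1 _ 0)) => /(_ isT).
  rewrite qform_block tr_scalar_mx mul1mx mulmx1 mulmx0 /qform /bilform trmx0 !mul0mx.
  by rewrite !mxE /al; lra.
split=> //; split; first by rewrite linearB /= linearZ /= trmx_mul trmxK D_sym.
move=> v v_neq0; pose tau := (b *m v) 0 0.
change (0 < qform (D - al^-1 *: (b^T *m b)) v).
have mxZ c (X : 'M[R]_1) : (c *: X) 0 0 = c * X 0 0 by rewrite !mxE.
have qS : qform (D - al^-1 *: (b^T *m b)) v = qform D v - al^-1 * tau ^+ 2.
  have mxB (X Y : 'M[R]_1) : (X - Y) 0 0 = X 0 0 - Y 0 0 by rewrite !mxE.
  rewrite /qform /bilform mulmxBr mulmxBl mxB -scalemxAr -scalemxAl mxZ.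
  congr (_ - _ * _); rewrite !mulmxA -trmx_mul -mulmxA /tau.
  set X := b *m v.
  by rewrite {1 2}(mx11_scalar X) tr_scalar_mx -scalar_mxM mxE /= mulr1n expr2.
have := pos (col_mx (- (al^-1 * tau))%:M v).
rewrite col_mx_eq0 negb_and v_neq0 orbT => /(_ isT).
rewrite qform_block (mx11_scalar a) -/al tr_scalar_mx qS.
rewrite -!scalar_mxM mul_scalar_mx -scalemxAl mxZ mxE /= mulr1n -/tau.
have -> : (- (al^-1 * tau)) * al * (- (al^-1 * tau)) + 2 * (- (al^-1 * tau) * tau)
     = - (al^-1 * tau ^+ 2) by field; exact: lt0r_neq0.
lra.
Qed.

Lemma cholesky n (M : 'M[R]_n) :
  posdef M -> exists L : 'M[R]_n, is_trig_mx L /\ M = L *m L^T.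
Proof.
elim: n M => [|n IH] M M_pd.
  by exists 0; split; [exact: mx0_is_trig | apply/matrixP => -[]].
pose M' : 'M[R]_(1 + n) := M.
set a := ulsubmx M'; set b := ursubmx M'; set D := drsubmx M'.
have EM : M' = block_mx a b b^T D.
  have M_sym : M'^T = M' := M_pd.1.
  by rewrite /b trmx_ursub M_sym submxK.
have [al_gt0 S_pd] : 0 < a 0 0 /\ posdef (D - (a 0 0)^-1 *: (b^T *m b)).
  by apply: posdef_schur; rewrite -EM; exact: M_pd.
have [K [K_trig EK]] := IH _ S_pd.
pose sq := Num.sqrt (a 0 0).
have sq_neq0 : sq != 0 by rewrite gt_eqF // sqrtr_gt0.
have sqsq : sq * sq = a 0 0 by rewrite -expr2 sqr_sqrtr // ltW.
exists (block_mx (sq%:M : 'M[R]_1) 0 (sq^-1 *: b^T) K : 'M[R]_(1 + n)); split.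
  have := is_trig_block_mx (sq%:M : 'M[R]_1) (0 : 'M[R]_(1, n)) (sq^-1 *: b^T) K erefl.
  by rewrite eqxx scalar_mx_is_trig K_trig => ->.
change (M' = block_mx (sq%:M : 'M[R]_1) 0 (sq^-1 *: b^T) K
          *m (block_mx (sq%:M : 'M[R]_1) 0 (sq^-1 *: b^T) K)^T).
rewrite EM tr_block_mx mulmx_block; congr block_mx.
- by rewrite trmx0 mulmx0 addr0 tr_scalar_mx -scalar_mxM sqsq -mx11_scalar.
- by rewrite mul0mx addr0 linearZ /= trmxK mul_scalar_mx scalerA mulfV // scale1r.
- by rewrite trmx0 mulmx0 addr0 tr_scalar_mx mul_mx_scalar scalerA mulfV // scale1r.
- rewrite -EK linearZ /= trmxK -scalemxAl -scalemxAr scalerA -invfM sqsq.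
  by rewrite addrC subrK.
Qed.

Lemma posdef_det_gt0 n (M : 'M[R]_n) : posdef M -> 0 < \det M.
Proof.
move=> M_pd; have [L [_ EL]] := cholesky M_pd.
have det_ge0 : 0 <= \det M by rewrite EL det_mulmx det_tr -expr2 sqr_ge0.
rewrite lt_def det_ge0 andbT; apply/negP => /det0P [v v_neq0 vM].
have := M_pd.2 v^T; rewrite trmx_eq0 => /(_ v_neq0).
by rewrite trmxK vM mul0mx mxE ltxx.
Qed.

Lemma posdef_unitmx n (M : 'M[R]_n) : posdef M -> M \in unitmx.
Proof. by move=> /posdef_det_gt0 det_gt0; rewrite unitmxE unitfE gt_eqF. Qed.

Lemma posdef_factor_unitmx n (M L : 'M[R]_n) : posdef M -> M = L *m L^T -> L \in unitmx.
Proof.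
move=> M_pd EL; rewrite unitmxE unitfE; apply: contraTneq (posdef_det_gt0 M_pd) => d0.
by rewrite EL det_mulmx det_tr d0 mul0r ltxx.
Qed.

Lemma posdef_congr n (L C : 'M[R]_n) :
  L \in unitmx -> posdef C -> posdef (L^T *m C *m L).
Proof.
move=> L_unit [C_sym C_pd]; split; first by rewrite !trmx_mul trmxK C_sym mulmxA.
move=> v v_neq0.
have -> : v^T *m (L^T *m C *m L) *m v = (L *m v)^T *m C *m (L *m v).
  by rewrite trmx_mul !mulmxA.
apply: C_pd; apply: contra v_neq0 => /eqP Lv.
by rewrite -(mulKmx L_unit v) Lv mulmx0.
Qed.

Lemma posdef_inv n (S : 'M[R]_n) : posdef S -> posdef (invmx S).
Proof.
move=> S_pd; have S_unit := posdef_unitmx S_pd.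
have -> : invmx S = (invmx S)^T *m S *m invmx S.
  by rewrite trmx_inv S_pd.1 mulVmx // mul1mx.
by apply: posdef_congr => //; rewrite unitmx_inv.
Qed.

Lemma posdef_scale n c (S : 'M[R]_n) : 0 < c -> posdef S -> posdef (c *: S).
Proof.
move=> c_gt0 [S_sym S_pd]; split; first by rewrite linearZ /= S_sym.
by move=> v v_neq0; rewrite -scalemxAr -scalemxAl mxE mulr_gt0 // S_pd.
Qed.

Lemma mahal_sqr p q (B : 'M[R]_(p, q)) S y x :
  posdef S -> mahal B S y x ^+ 2 = qform (invmx S) (resid B y x).
Proof.
by move=> S_pd; rewrite /mahal sqr_sqrtr //; exact: posdef_qform_ge0 (posdef_inv S_pd).
Qed.

(* Hadamard's inequality [det M <= prod M_ii] (read off a Cholesky factor)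
   followed by the AM-GM inequality on the diagonal. *)
Lemma det_le_trace_pow n (M : 'M[R]_n) : posdef M -> \det M <= (\tr M / n%:R) ^+ n.
Proof.
move=> M_pd; have [L [L_trig EL]] := cholesky M_pd.
have det_diag : \det M = \prod_i L i i ^+ 2.
  by rewrite EL det_mulmx det_tr -expr2 (det_trig L_trig) prodrXl.
have diag_le i : L i i ^+ 2 <= M i i.
  rewrite EL !mxE (bigD1 i) //= mxE -expr2 lerDl.
  by apply: sumr_ge0 => k _; rewrite mxE -expr2 sqr_ge0.
apply: (@le_trans _ _ (\prod_i M i i)).
  by rewrite det_diag; apply: ler_prod => i _; rewrite sqr_ge0 diag_le.
have AGM := (@leif_AGM _ _ predT (fun i => M i i)
                (fun i _ => le_trans (sqr_ge0 _) (diag_le i))).1.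
have card_n : #|@predT 'I_n| = n by rewrite -[RHS]card_ord; apply: eq_card.
by rewrite card_n in AGM; exact: AGM.
Qed.

Lemma quadratic_ge0_lin0 (g h : R) : (forall t, 0 <= t ^+ 2 * h - 2 * t * g) -> g = 0.
Proof.
move=> ge0; pose t := g / (`|h| + 1).
have h1_gt0 : 0 < `|h| + 1 by rewrite ltr_wpDl.
have g_def : g = t * (`|h| + 1) by rewrite /t divfK // gt_eqF.
have t_sq : t ^+ 2 <= 0.
  have := ge0 t; have := ler_norm h; have := normr_ge0 h.
  rewrite g_def !expr2; nra.
suff t0 : t = 0 by rewrite g_def t0 mul0r.
by apply/eqP; rewrite -sqrf_eq0 eq_le sqr_ge0 t_sq.
Qed.

Lemma posdef_psd_unitmx n (S : 'M[R]_n) :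
  S^T = S -> (forall v, 0 <= qform S v) -> S \in unitmx -> posdef S.
Proof.
move=> S_sym S_psd S_unit; split=> // v v_neq0; change (0 < qform S v).
rewrite lt_def S_psd andbT; apply: contra v_neq0 => /eqP qv0.
suff Sv : S *m v = 0 by rewrite -(mulKmx S_unit v) Sv mulmx0.
apply/matrixP => j k; rewrite ord1 !mxE.
pose u : 'cV[R]_n := delta_mx j 0.
have -> : \sum_k (S j k * v k 0) = bilform S u v.
  by rewrite /bilform trmx_delta -mulmxA -rowE !mxE.
apply: (@quadratic_ge0_lin0 _ (qform S u)) => t.
have := S_psd (v - t *: u); rewrite qformB // qformZ bilformZl.
by rewrite (bilformC _ _ S_sym) qv0; lra.
Qed.

Lemma wcov_sym n p q (w : 'I_n -> R) y x (B : 'M[R]_(p, q)) :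
  (wcov w y x B)^T = wcov w y x B.
Proof.
rewrite /wcov linear_sum /=; apply: eq_bigr => i _.
by rewrite linearZ /= trmx_mul trmxK.
Qed.

Lemma qform_wcov n p q (w : 'I_n -> R) y x (B : 'M[R]_(p, q)) v :
  qform (wcov w y x B) v = \sum_i w i * bilform 1%:M v (resid B (y i) (x i)) ^+ 2.
Proof.
rewrite /qform /bilform /wcov mulmx_sumr mulmx_suml summxE; apply: eq_bigr => i _.
set r := resid B (y i) (x i).
rewrite -scalemxAr -scalemxAl mxE mulmx1 !mulmxA -(mulmxA _ _ v).
rewrite (mx11_scalar (r^T *m v)) mul_mx_scalar mxE expr2; congr (_ * (_ * _)).
by rewrite -trmx11E trmx_mul trmxK.
Qed.

Lemma wcov_posdef n p q (w : 'I_n -> R) y x (B : 'M[R]_(p, q)) :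
  (forall i, 0 <= w i) -> 0 < \det (wcov w y x B) -> posdef (wcov w y x B).
Proof.
move=> w_ge0 det_gt0; apply: posdef_psd_unitmx; first exact: wcov_sym.
  by move=> v; rewrite qform_wcov sumr_ge0 // => i _; rewrite mulr_ge0 ?sqr_ge0.
by rewrite unitmxE unitfE gt_eqF.
Qed.

Lemma det_mul_le_trace_pow n (T C : 'M[R]_n) : posdef T -> posdef C ->
  \det T * \det C <= (\tr (T *m C) / n%:R) ^+ n.
Proof.
move=> T_pd C_pd; have [L [_ EL]] := cholesky T_pd.
have det_T : \det T = \det L * \det L by rewrite EL det_mulmx det_tr.
have := det_le_trace_pow (posdef_congr (posdef_factor_unitmx T_pd EL) C_pd).
by rewrite !det_mulmx det_tr mxtrace_mulC mulmxA -EL det_T mulrAC.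
Qed.

Lemma posdef_diag_gt0 n (M : 'M[R]_n) i : posdef M -> 0 < M i i.
Proof.
move=> M_pd; have e_neq0 : delta_mx i 0 != 0 :> 'cV[R]_n.
  by apply/eqP => /matrixP/(_ i 0)/eqP; rewrite !mxE !eqxx oner_eq0.
by have := M_pd.2 _ e_neq0; rewrite trmx_delta -rowE -colE !mxE.
Qed.

Lemma mxtrace_posdef_mul_ge0 n (A C : 'M[R]_n) : posdef A -> posdef C -> 0 <= \tr (A *m C).
Proof.
move=> A_pd C_pd; have [L [_ EL]] := cholesky A_pd.
have LCL_pd := posdef_congr (posdef_factor_unitmx A_pd EL) C_pd.
rewrite EL -mulmxA mxtrace_mulC; apply: sumr_ge0 => i _.
exact: ltW (posdef_diag_gt0 i LCL_pd).
Qed.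

Lemma powR_invn_expr (a : R) n : 0 <= a -> (0 < n)%N -> powR a n%:R^-1 ^+ n = a.
Proof.
move=> a_ge0 n_gt0; rewrite -powR_mulrn ?powR_ge0 // -powRrM mulVf ?powRr1 //.
by rewrite pnatr_eq0 -lt0n.
Qed.

Lemma normalized_posdef n (C : 'M[R]_n) s : (0 < n)%N -> 0 < s -> posdef C ->
  posdef ((s / powR (\det C) n%:R^-1) *: C) /\
  \det ((s / powR (\det C) n%:R^-1) *: C) = s ^+ n.
Proof.
move=> n_gt0 s_gt0 C_pd; have C_det := posdef_det_gt0 C_pd.
have c_gt0 : 0 < powR (\det C) n%:R^-1 by rewrite powR_gt0.
split; first by apply: posdef_scale => //; rewrite divr_gt0.
by rewrite detZ exprMn exprVn powR_invn_expr ?ltW // divfK ?gt_eqF.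
Qed.

(* Among matrices [S] of determinant [s^n], [tr (S^-1 C)] is smallest for [S]
   proportional to [C]: this is the AM-GM bound [det_mul_le_trace_pow]. *)
Lemma trace_normalized_le n (S C : 'M[R]_n) s :
  (0 < n)%N -> 0 < s -> posdef S -> posdef C -> \det S = s ^+ n ->
  \tr (invmx ((s / powR (\det C) n%:R^-1) *: C) *m C) <= \tr (invmx S *m C).
Proof.
move=> n_gt0 s_gt0 S_pd C_pd S_det; have C_det := posdef_det_gt0 C_pd.
set c := powR (\det C) n%:R^-1.
have c_gt0 : 0 < c by rewrite powR_gt0.
have [N_pd _] := normalized_posdef n_gt0 s_gt0 C_pd.
have C_unit := posdef_unitmx C_pd.
rewrite invmxZ ?posdef_unitmx // -scalemxAl mulVmx // mxtraceZ mxtrace1 invf_div.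
have tr_ge0 := mxtrace_posdef_mul_ge0 (posdef_inv S_pd) C_pd.
have := det_mul_le_trace_pow (posdef_inv S_pd) C_pd.
rewrite det_inv S_det -[\det C](powR_invn_expr (ltW C_det) n_gt0) -/c => AGM.
rewrite -ler_pdivlMr ?ltr0n // -(ler_pXn2r n_gt0); last 2 first.
- by rewrite nnegrE divr_ge0 // ltW.
- by rewrite nnegrE divr_ge0 // ler0n.
by rewrite exprMn exprVn mulrC.
Qed.

End QuadraticForms.

Section WeightedLeastSquares.
Variable R : realType.
Variables (n p q : nat) (w : 'I_n -> R) (y : 'I_n -> 'cV[R]_q) (x : 'I_n -> 'cV[R]_p).

Lemma sqnorm_qform (v : 'cV[R]_q) : sqnorm v = qform 1%:M v.
Proof. by rewrite /sqnorm /qform /bilform mulmx1. Qed.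

Lemma wls_normal_eq (B0 : 'M[R]_(p, q)) :
  (forall B, wls_obj w y x B0 <= wls_obj w y x B) ->
  forall E : 'M[R]_(p, q),
    \sum_i w i * bilform 1%:M (E^T *m x i) (resid B0 (y i) (x i)) = 0.
Proof.
move=> B0_min E; set G := \sum_i _.
apply: (quadratic_ge0_lin0 (h := \sum_i w i * sqnorm (E^T *m x i))) => t.
have obj_expand : wls_obj w y x (B0 + t *: E) =
    wls_obj w y x B0 - 2 * t * G + t ^+ 2 * \sum_i w i * sqnorm (E^T *m x i).
  rewrite /wls_obj /G !mulr_sumr -sumrB -big_split /=; apply: eq_bigr => i _.
  have -> : resid (B0 + t *: E) (y i) (x i) = resid B0 (y i) (x i) - t *: (E^T *m x i).
    by rewrite /resid linearD linearZ /= mulmxDl -scalemxAl opprD addrA.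
  rewrite !sqnorm_qform qformB ?tr_scalar_mx // qformZ bilformZl; ring.
by have := B0_min (B0 + t *: E); rewrite obj_expand; lra.
Qed.

(* The cross term vanishes by [wls_normal_eq] with [E := (B - B0) T]. *)
Lemma wls_min_qform (B0 : 'M[R]_(p, q)) (T : 'M[R]_q) :
  (forall i, 0 <= w i) -> (forall B, wls_obj w y x B0 <= wls_obj w y x B) -> posdef T ->
  forall B, \sum_i w i * qform T (resid B0 (y i) (x i))
            <= \sum_i w i * qform T (resid B (y i) (x i)).
Proof.
move=> w_ge0 B0_min T_pd B; pose D := B - B0.
pose r0 i := resid B0 (y i) (x i).
have -> : \sum_i w i * qform T (resid B (y i) (x i)) =
    \sum_i w i * qform T (r0 i)
    - 2 * \sum_i w i * bilform 1%:M ((D *m T)^T *m x i) (r0 i)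
    + \sum_i w i * qform T (D^T *m x i).
  rewrite mulr_sumr -sumrB -big_split /=; apply: eq_bigr => i _.
  have -> : resid B (y i) (x i) = r0 i - D^T *m x i.
    by rewrite /r0 /resid /D linearB /= mulmxBl opprB addrA subrK.
  rewrite qformB ?T_pd.1 //.
  have -> : bilform T (D^T *m x i) (r0 i) = bilform 1%:M ((D *m T)^T *m x i) (r0 i).
    by rewrite /bilform !trmx_mul !trmxK mulmx1 !mulmxA.
  ring.
rewrite wls_normal_eq // mulr0 subr0 lerDl.
by apply: sumr_ge0 => i _; rewrite mulr_ge0 // posdef_qform_ge0.
Qed.

End WeightedLeastSquares.

Section MEstimationStep.
Variable R : realType.
Variables rho psi W : R -> R.
Hypothesis rho_mono : forall a b, 0 <= a -> a <= b -> rho a <= rho b.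
Hypothesis rho_deriv : forall u, is_derive u (1 : R) rho (psi u).
Hypothesis W_def : forall u, u != 0 -> W u = psi u / u.
Hypothesis W_noninc : forall u v, `|u| <= `|v| -> W v <= W u.

(* The derivative of [u |-> rho u - W a / 2 * u^2] is [u (W u - W a)], which
   has the sign of [a - u] for [u > 0]; so this function peaks at [a]. *)
Lemma rho_le_quadratic a b :
  0 <= a -> 0 <= b -> rho b <= rho a + W a / 2 * (b ^+ 2 - a ^+ 2).
Proof.
move=> a_ge0 b_ge0; set c := W a / 2.
pose h u := rho u - c * (u * u).
have h_deriv u : is_derive u (1 : R) h (psi u - c * (u + u)).
  have -> : c * (u + u) = c * (u *: 1 + u *: 1) by rewrite !scaler1.
  exact: is_deriveB.
have h_cont (l r : R) : {within `[l, r], continuous h}%classic.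
  apply: derivable_within_continuous => z _.
  exact: (@ex_derive _ _ _ _ _ _ _ (h_deriv z)).
have h'E u : 0 < u -> psi u - c * (u + u) = u * (W u - W a).
  by move=> u_gt0; rewrite W_def ?gt_eqF // /c; field; exact: lt0r_neq0.
suff : h b <= h a by rewrite /h -!expr2 mulrBr; lra.
case: (ltgtP a b) => [ab|ba|->] //.
- have [z] := MVT ab (fun z _ => h_deriv z) (h_cont a b).
  rewrite in_itv /= => /andP[az zb] hE.
  have z_gt0 : 0 < z := le_lt_trans a_ge0 az.
  rewrite -subr_le0 hE h'E //; apply: mulr_le0_ge0; last by rewrite subr_ge0 ltW.
  apply: mulr_ge0_le0; first exact: ltW.
  by rewrite subr_le0; apply: W_noninc; rewrite !ger0_norm // ltW.
- have [z] := MVT ba (fun z _ => h_deriv z) (h_cont b a).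
  rewrite in_itv /= => /andP[bz za] hE.
  have z_gt0 : 0 < z := le_lt_trans b_ge0 bz.
  rewrite -subr_ge0 hE h'E //; apply: mulr_ge0; last by rewrite subr_ge0 ltW.
  apply: mulr_ge0; first exact: ltW.
  by rewrite subr_ge0; apply: W_noninc; rewrite !ger0_norm // ltW.
Qed.

(* [rho] is nondecreasing while [rho_le_quadratic] between [v] and [v + 1]
   bounds [rho (v + 1) - rho v] by a positive multiple of [W v]. *)
Lemma W_ge0 u : 0 <= W u.
Proof.
have W_nneg v : 0 <= v -> 0 <= W v.
  move=> v_ge0; have v1_ge0 : 0 <= v + 1 by rewrite addr_ge0.
  have v_le : v <= v + 1 by rewrite lerDl.
  have := le_trans (rho_mono v_ge0 v_le) (rho_le_quadratic v_ge0 v1_ge0).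
  have gap_gt0 : 0 < (v + 1) ^+ 2 - v ^+ 2 by rewrite !expr2; nra.
  by rewrite lerDl pmulr_lge0 // pmulr_lge0 // invr_gt0 ltr0n.
by apply: le_trans (W_nneg _ (normr_ge0 u)) _; apply: W_noninc; rewrite normr_id.
Qed.

Lemma rho_sum_step n p q (y : 'I_n -> 'cV[R]_q) (x : 'I_n -> 'cV[R]_p)
    (w : 'I_n -> R) (s : R) (B0 B1 : 'M[R]_(p, q)) (S0 : 'M[R]_q) :
  (0 < q)%N -> 0 < s -> posdef S0 -> \det S0 = s ^+ q ->
  (forall i, w i = W (mahal B0 S0 (y i) (x i))) ->
  (forall B, wls_obj w y x B1 <= wls_obj w y x B) -> 0 < \det (wcov w y x B1) ->
  \sum_i rho (mahal B1 ((s / powR (\det (wcov w y x B1)) q%:R^-1) *: wcov w y x B1)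
                (y i) (x i))
  <= \sum_i rho (mahal B0 S0 (y i) (x i)).
Proof.
move=> q_gt0 s_gt0 S0_pd S0_det w_def B1_min C_det.
set C := wcov w y x B1; set S1 := _ *: C.
have w_ge0 i : 0 <= w i by rewrite w_def W_ge0.
have C_pd : posdef C := wcov_posdef w_ge0 C_det.
have [S1_pd _] := normalized_posdef q_gt0 s_gt0 C_pd.
pose r0 i := resid B0 (y i) (x i); pose r1 i := resid B1 (y i) (x i).
have majorize i : rho (mahal B1 S1 (y i) (x i)) <= rho (mahal B0 S0 (y i) (x i))
    + w i / 2 * (qform (invmx S1) (r1 i) - qform (invmx S0) (r0 i)).
  by rewrite -!mahal_sqr // w_def; apply: rho_le_quadratic; exact: sqrtr_ge0.
have decrease : \sum_i w i * qform (invmx S1) (r1 i)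
                <= \sum_i w i * qform (invmx S0) (r0 i).
  have trC A : \sum_i w i * qform A (r1 i) = \tr (A *m C) by rewrite sum_qform_trace.
  rewrite trC; apply: le_trans (trace_normalized_le q_gt0 s_gt0 S0_pd C_pd S0_det) _.
  by rewrite -trC; exact: wls_min_qform w_ge0 B1_min (posdef_inv S0_pd) B0.
apply: le_trans (ler_sum _ (fun i _ => majorize i)) _.
rewrite big_split /=.
have -> : \sum_i w i / 2 * (qform (invmx S1) (r1 i) - qform (invmx S0) (r0 i)) =
    2^-1 * (\sum_i w i * qform (invmx S1) (r1 i) - \sum_i w i * qform (invmx S0) (r0 i)).
  by rewrite -sumrB mulr_sumr; apply: eq_bigr => i _; ring.
lra.
Qed.

End MEstimationStep.

Theorem theorem7 (R : realType) (n p q : nat)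
  (y : 'I_n -> 'cV[R]_q) (x : 'I_n -> 'cV[R]_p)
  (rho1 psi1 W : R -> R) (sigma : R)
  (B : nat -> 'M[R]_(p, q)) (Sigma : nat -> 'M[R]_q) (Gamma0 : 'M[R]_q) :
  (0 < q)%N ->
  rho_function rho1 ->
  (forall u : R, is_derive u (1 : R) rho1 (psi1 u)) ->
  (forall u, u != 0 -> W u = psi1 u / u) ->
  0 < sigma ->
  posdef Gamma0 -> \det Gamma0 = 1 ->
  Sigma 0%N = sigma ^+ 2 *: Gamma0 ->
  (forall k : nat,
     let w := fun i => W (mahal (B k) (Sigma k) (y i) (x i)) in
     (forall B' : 'M[R]_(p, q), wls_obj w y x (B k.+1) <= wls_obj w y x B') /\
     0 < \det (wcov w y x (B k.+1)) /\
     Sigma k.+1 = (sigma ^+ 2 / powR (\det (wcov w y x (B k.+1))) (q%:R^-1))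
                    *: wcov w y x (B k.+1)) ->
  (* W nonincreasing in |u| *)
  (forall u v, `|u| <= `|v| -> W v <= W u) ->
  forall k : nat,
    \sum_(i < n) rho1 (mahal (B k.+1) (Sigma k.+1) (y i) (x i))
    <= \sum_(i < n) rho1 (mahal (B k) (Sigma k) (y i) (x i)).
Proof.
move=> q_gt0 [_ [_ [rho_mono _]]] rho_deriv W_def sigma_gt0 Gamma0_pd Gamma0_det Sigma0
  step W_noninc.
have s_gt0 : 0 < sigma ^+ 2 by rewrite exprn_gt0.
have W_nneg := W_ge0 rho_mono rho_deriv W_def W_noninc.
have Sigma_pd_det k : posdef (Sigma k) /\ \det (Sigma k) = (sigma ^+ 2) ^+ q.
  case: k => [|k].
    by rewrite Sigma0 detZ Gamma0_det mulr1; split=> //; exact: posdef_scale.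
  have [_ [C_det ->]] := step k.
  by apply: normalized_posdef => //; apply: wcov_posdef C_det => i; exact: W_nneg.
move=> k; have [S_pd S_det] := Sigma_pd_det k; have [B_min [C_det ->]] := step k.
exact: (rho_sum_step rho_mono rho_deriv W_def W_noninc q_gt0 s_gt0 S_pd S_det
          (fun i => erefl) B_min C_det).
Qed.
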